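(* Let $\mathcal T$ be an orbital category. The following are equivalent: (a) $\mathcal T$ is atomic; (b) for every map $f:U\to V$ in $\mathcal T$ and every $X\in\mathbb F_U$, if $\mathrm{Ind}_U^VX\simeq *_V$ then $f$ is an isomorphism and $X\simeq *_U$.
   Context: For a small category $\mathcal T$, $\mathbb F_{\mathcal T}$ is the full subcategory of $\mathrm{Fun}(\mathcal T^{op},\mathrm{Set})$ on finite coproducts of representables. $\mathcal T$ is orbital if $\mathbb F_{\mathcal T}$ has pullbacks, and atomic if every morphism $r:X\to Y$ in $\mathcal T$ admitting a section $s:Y\to X$ with $r\circ s=\mathrm{id}$ is an isomorphism. $\mathbb F_V:=\mathbb F_{\mathcal T,/V}$, $*_V$ is its terminal object, and for $f:U\to V$, $\mathrm{Ind}_U^V:\mathbb F_U\to\mathbb F_V$ is postcomposition with $f$. *)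

From Stdlib Require Import Vectors.Fin.

Record Category := {
  Ob :> Type;
  Hom : Ob -> Ob -> Type;
  comp : forall a b c : Ob, Hom b c -> Hom a b -> Hom a c;
  idm : forall a : Ob, Hom a a;
  comp_assoc : forall (a b c d : Ob) (h : Hom c d) (g : Hom b c) (f : Hom a b),
      comp a c d h (comp a b c g f) = comp a b d (comp b c d h g) f;
  comp_id_l : forall (a b : Ob) (f : Hom a b), comp a b b (idm b) f = f;
  comp_id_r : forall (a b : Ob) (f : Hom a b), comp a a b f (idm a) = f
}.
Arguments Hom {_} _ _.
Arguments comp {_ _ _ _} _ _.
Arguments idm {_} _.

Definition is_iso {C : Category} {a b : C} (f : Hom a b) : Prop :=
  exists g : Hom b a, comp f g = idm b /\ comp g f = idm a.

Definition atomic (C : Category) : Prop :=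
  forall (X Y : C) (r : Hom X Y) (s : Hom Y X), comp r s = idm Y -> is_iso r.

Record Presheaf (C : Category) := {
  P0 :> C -> Type;
  P1 : forall a b : C, Hom a b -> P0 b -> P0 a;
  P1_id : forall (a : C) (x : P0 a), P1 a a (idm a) x = x;
  P1_comp : forall (a b c : C) (g : Hom b c) (f : Hom a b) (x : P0 c),
      P1 a c (comp g f) x = P1 a b f (P1 b c g x)
}.
Arguments P0 {C} p a.
Arguments P1 {C} p {a b} f x.

Record NatTrans {C : Category} (P Q : Presheaf C) := {
  nt :> forall a : C, P a -> Q a;
  nt_nat : forall (a b : C) (f : Hom a b) (x : P b),
      nt a (P1 P f x) = P1 Q f (nt b x)
}.
Arguments nt {C P Q} n a x.

Definition nt_eq {C : Category} {P Q : Presheaf C} (s t : NatTrans P Q) : Prop :=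
  forall (a : C) (x : P a), s a x = t a x.

Definition nt_id {C : Category} (P : Presheaf C) : NatTrans P P :=
  {| nt := fun a x => x; nt_nat := fun a b f x => eq_refl |}.

Definition nt_comp {C : Category} {P Q R : Presheaf C}
  (t : NatTrans Q R) (s : NatTrans P Q) : NatTrans P R.
Proof.
  refine {| nt := fun a x => t a (s a x) |}.
  intros a b f x. rewrite (nt_nat _ _ s), (nt_nat _ _ t). reflexivity.
Defined.

Definition psh_iso {C : Category} {P Q : Presheaf C} (s : NatTrans P Q) : Prop :=
  exists t : NatTrans Q P, nt_eq (nt_comp s t) (nt_id Q) /\ nt_eq (nt_comp t s) (nt_id P).

Definition yon {C : Category} (X : C) : Presheaf C.
Proof.
  refine {| P0 := fun c => Hom c X; P1 := fun a b f g => comp g f |}.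
  - intros a x. apply comp_id_r.
  - intros a b c g f x. apply comp_assoc.
Defined.

Definition yon_map {C : Category} {X Y : C} (f : Hom X Y) : NatTrans (yon X) (yon Y).
Proof.
  refine {| nt := fun c (g : P0 (yon X) c) => (comp f g : P0 (yon Y) c) |}.
  intros a b h x. simpl. apply comp_assoc.
Defined.

Definition coprod_rep {C : Category} (n : nat) (X : Fin.t n -> C) : Presheaf C.
Proof.
  refine {| P0 := fun c => {i : Fin.t n & Hom c (X i)};
            P1 := fun a b f x => existT _ (projT1 x) (comp (projT2 x) f) |}.
  - intros a [i x]. simpl. rewrite comp_id_r. reflexivity.
  - intros a b c g f [i x]. simpl. rewrite comp_assoc. reflexivity.
Defined.

(** Objects of F_T: presheaves isomorphic to a finite coproduct of representables *)
Definition InFT {C : Category} (P : Presheaf C) : Prop :=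
  exists (n : nat) (X : Fin.t n -> C) (s : NatTrans P (coprod_rep n X)), psh_iso s.

Definition FT_has_pullbacks (C : Category) : Prop :=
  forall (A B D : Presheaf C), InFT A -> InFT B -> InFT D ->
  forall (f : NatTrans A D) (g : NatTrans B D),
  exists (P : Presheaf C) (p1 : NatTrans P A) (p2 : NatTrans P B),
    InFT P /\ nt_eq (nt_comp f p1) (nt_comp g p2) /\
    forall (Q : Presheaf C) (q1 : NatTrans Q A) (q2 : NatTrans Q B),
      InFT Q -> nt_eq (nt_comp f q1) (nt_comp g q2) ->
      exists u : NatTrans Q P,
        nt_eq (nt_comp p1 u) q1 /\ nt_eq (nt_comp p2 u) q2 /\
        forall u' : NatTrans Q P,
          nt_eq (nt_comp p1 u') q1 -> nt_eq (nt_comp p2 u') q2 -> nt_eq u' u.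

Definition orbital (C : Category) : Prop := FT_has_pullbacks C.

Record SliceOb {C : Category} (V : C) := {
  so_ob : Presheaf C;
  so_in : InFT so_ob;
  so_map : NatTrans so_ob (yon V)
}.
Arguments so_ob {C V} s.
Arguments so_in {C V} s.
Arguments so_map {C V} s.

Definition slice_iso {C : Category} {V : C} (S S' : SliceOb V) : Prop :=
  exists phi : NatTrans (so_ob S) (so_ob S'),
    nt_eq (nt_comp (so_map S') phi) (so_map S) /\
    exists psi : NatTrans (so_ob S') (so_ob S),
      nt_eq (nt_comp (so_map S) psi) (so_map S') /\
      nt_eq (nt_comp phi psi) (nt_id _) /\ nt_eq (nt_comp psi phi) (nt_id _).

Lemma yon_InFT {C : Category} (V : C) : InFT (yon V).
Proof.
  exists 1, (fun _ => V).
  unshelve eexists.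
  - refine {| nt := fun c (g : P0 (yon V) c) => existT _ Fin.F1 g : coprod_rep 1 (fun _ => V) c |}.
    intros. reflexivity.
  - unshelve eexists.
    + refine {| nt := fun c (x : coprod_rep 1 (fun _ : Fin.t 1 => V) c) => (projT2 x : P0 (yon V) c) |}.
      intros a b f [i x]. reflexivity.
    + split.
      * intros a [i x]. simpl.
        revert x. pattern i. apply Fin.caseS'; [reflexivity|].
        intro j. inversion j.
      * intros a x. reflexivity.
Qed.

Definition slice_terminal {C : Category} (V : C) : SliceOb V :=
  {| so_ob := yon V; so_in := yon_InFT V; so_map := nt_id (yon V) |}.

Definition Ind {C : Category} {U V : C} (f : Hom U V) (X : SliceOb U) : SliceOb V :=
  {| so_ob := so_ob X; so_in := so_in X; so_map := nt_comp (yon_map f) (so_map X) |}.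

(** A map [f : U -> V] with [Ind f X ≅ *_V] acquires a section: the point of [X]
    over [id_V] lies over some [s : V -> U] with [f ∘ s = id]. In an atomic
    category [f] is then an isomorphism, and induction along an isomorphism
    reflects the terminal object. Conversely, a retraction [r : X -> Y] with
    section [s] induces [(y Y, s)] over [X] to [(y Y, r ∘ s) = *_Y], so (b)
    forces [r] to be an isomorphism. *)

Section SliceIso.
Context {C : Category}.

Definition mono {a b : C} (f : Hom a b) : Prop :=
  forall (c : C) (g h : Hom c a), comp f g = comp f h -> g = h.

Lemma is_iso_mono {a b : C} (f : Hom a b) : is_iso f -> mono f.
Proof.
  intros [g [_ Hgf]] c h k Hfhk.
  rewrite <- (comp_id_l _ _ _ h), <- (comp_id_l _ _ _ k), <- Hgf,
    <- !comp_assoc, Hfhk.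
  reflexivity.
Qed.

Lemma slice_iso_trans {V : C} (S S' S'' : SliceOb V) :
  slice_iso S S' -> slice_iso S' S'' -> slice_iso S S''.
Proof.
  intros [phi1 [Hphi1 [psi1 [Hpsi1 [H1 H1']]]]]
         [phi2 [Hphi2 [psi2 [Hpsi2 [H2 H2']]]]].
  unfold nt_eq in *; cbn in *.
  exists (nt_comp phi2 phi1).
  split; [intros a x; cbn; rewrite Hphi2; apply Hphi1|].
  exists (nt_comp psi1 psi2).
  split; [intros a x; cbn; rewrite Hpsi1; apply Hpsi2|].
  split; intros a x; cbn.
  - rewrite H1; apply H2.
  - rewrite H2'; apply H1'.
Qed.

Lemma slice_iso_Ind_mono {U V : C} (f : Hom U V) (X Y : SliceOb U) :
  mono f -> slice_iso (Ind f X) (Ind f Y) -> slice_iso X Y.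
Proof.
  intros Hf [phi [Hphi [psi [Hpsi Hinv]]]].
  exists phi; split; [intros a x; apply Hf, Hphi|].
  exists psi; split; [intros a x; apply Hf, Hpsi|].
  exact Hinv.
Qed.

Lemma slice_terminal_Ind_iso {U V : C} (f : Hom U V) :
  is_iso f -> slice_iso (slice_terminal V) (Ind f (slice_terminal U)).
Proof.
  intros [g [Hfg Hgf]].
  exists (yon_map g).
  split; [intros a h; cbn; rewrite comp_assoc, Hfg; apply comp_id_l|].
  exists (yon_map f).
  split; [intros a h; reflexivity|].
  split; intros a h; cbn; rewrite comp_assoc.
  - rewrite Hgf; apply comp_id_l.
  - rewrite Hfg; apply comp_id_l.
Qed.

Lemma Ind_iso_terminal_section {U V : C} (f : Hom U V) (X : SliceOb U) :
  slice_iso (Ind f X) (slice_terminal V) -> exists s : Hom V U, comp f s = idm V.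
Proof.
  intros [_ [_ [psi [Hpsi _]]]].
  exists (so_map X V (psi V (idm V))).
  exact (Hpsi V (idm V)).
Qed.

Definition rep_slice {U V : C} (s : Hom V U) : SliceOb U :=
  {| so_ob := yon V; so_in := yon_InFT V; so_map := yon_map s |}.

Lemma Ind_rep_slice_section {X Y : C} (r : Hom X Y) (s : Hom Y X) :
  comp r s = idm Y -> slice_iso (Ind r (rep_slice s)) (slice_terminal Y).
Proof.
  intros Hrs.
  assert (Hover : forall (a : C) (h : Hom a Y), comp r (comp s h) = h)
    by (intros a h; rewrite comp_assoc, Hrs; apply comp_id_l).
  exists (nt_id _); split; [intros a h; symmetry; apply Hover|].
  exists (nt_id _); split; [exact Hover|].
  split; intros a h; reflexivity.
Qed.

End SliceIso.

Theorem mainTheorem4 (C : Category) (HC : orbital C) :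
  atomic C <->
  (forall (U V : C) (f : Hom U V) (X : SliceOb U),
      slice_iso (Ind f X) (slice_terminal V) ->
      is_iso f /\ slice_iso X (slice_terminal U)).
Proof.
  split.
  - intros Hat U V f X HX.
    destruct (Ind_iso_terminal_section f X HX) as [s Hfs].
    assert (Hf : is_iso f) by exact (Hat _ _ f s Hfs).
    split; [exact Hf|].
    apply (slice_iso_Ind_mono f); [apply is_iso_mono, Hf|].
    exact (slice_iso_trans _ _ _ HX (slice_terminal_Ind_iso f Hf)).
  - intros Hb X Y r s Hrs.
    exact (proj1 (Hb _ _ r (rep_slice s) (Ind_rep_slice_section r s Hrs))).
Qed.
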